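(* Let $\mu:\mathbb{R}^{n\times n}\to\mathbb{R}$ be the matrix measure induced by an orthant-monotonic norm on $\mathbb{R}^n$, and let $A\in\mathbb{R}^{n\times n}$. If $\mu(A)<0$, then every diagonal entry $a_{ii}$ of $A$ is negative.
   Context: For a vector norm $|\cdot|$ on $\mathbb{R}^n$, the induced matrix norm is $\|A\|=\max_{|x|=1}|Ax|$ and the induced matrix measure is $\mu(A)=\lim_{\varepsilon\to0^+}(\|I_n+\varepsilon A\|-1)/\varepsilon$. A norm $|\cdot|$ on $\mathbb{R}^n$ is orthant-monotonic if for all $x,y\in\mathbb{R}^n$: whenever $x_iy_i\ge 0$ and $|x_i|\le|y_i|$ for all $i$, then $|x|\le|y|$. *)

From HB Require Import structures.
From mathcomp Require Import all_boot all_order all_algebra.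
From mathcomp Require Import all_classical all_reals all_analysis.
Set Implicit Arguments. Unset Strict Implicit. Unset Printing Implicit Defensive.
Import Order.TTheory GRing.Theory Num.Theory.
Import numFieldNormedType.Exports.
Local Open Scope classical_set_scope.
Local Open Scope ring_scope.

Definition is_vnorm (R : realType) (n : nat) (N : 'cV[R]_n -> R) : Prop :=
  (forall x, 0 <= N x) /\
  (forall x, N x = 0 -> x = 0) /\
  (forall (a : R) x, N (a *: x) = `|a| * N x) /\
  (forall x y, N (x + y) <= N x + N y).

Definition orthant_monotonic (R : realType) (n : nat) (N : 'cV[R]_n -> R) : Prop :=
  forall x y : 'cV[R]_n,
    (forall i, 0 <= x i 0 * y i 0 /\ `|x i 0| <= `|y i 0|) -> N x <= N y.

Definition induced_norm (R : realType) (n : nat) (N : 'cV[R]_n -> R)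
  (A : 'M[R]_n) : R :=
  sup [set N (A *m x) | x in [set x | N x = 1]].

Definition matrix_measure (R : realType) (n : nat) (N : 'cV[R]_n -> R)
  (A : 'M[R]_n) : R :=
  lim ((fun e : R => (induced_norm N (1%:M + e *: A) - 1) / e) @ 0^'+).

(* Orthant monotonicity lets us discard every coordinate but the i-th, so
   ||M|| >= |m_ii| for the norm induced on matrices (test M on the i-th unit
   vector).  Applied to M = I + eA this gives (||I + eA|| - 1)/e >= a_ii for
   all e > 0, hence mu(A) >= a_ii. *)
From HB Require Import structures.
From mathcomp Require Import all_boot all_order all_algebra.
From mathcomp Require Import all_classical all_reals all_analysis.
Set Implicit Arguments.
Unset Strict Implicit.
Unset Printing Implicit Defensive.

Import Order.TTheory GRing.Theory Num.Theory.
Import numFieldNormedType.Exports.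
Local Open Scope classical_set_scope.
Local Open Scope ring_scope.

Section InducedNorm.
Variables (R : realType) (n : nat) (N : 'cV[R]_n -> R).
Hypothesis vnormN : is_vnorm N.
Hypothesis monoN : orthant_monotonic N.

Lemma vnorm0 : N 0 = 0.
Proof.
case: vnormN => _ [_ [homN _]].
by rewrite -(scale0r (0 : 'cV[R]_n)) homN normr0 mul0r.
Qed.

Lemma vnorm_sum_le m (F : 'I_m -> 'cV[R]_n) :
  N (\sum_(j < m) F j) <= \sum_(j < m) N (F j).
Proof.
case: vnormN => _ [_ [_ triN]].
apply: (big_rec2 (fun a b => N a <= b)); first by rewrite vnorm0.
by move=> j a b _ hab; apply: le_trans (triN _ _) _; rewrite lerD2l.
Qed.

Lemma vnorm_delta_gt0 j : 0 < N (delta_mx j 0 : 'cV[R]_n).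
Proof.
case: vnormN => ge0N [defN _]; rewrite lt_def ge0N andbT.
apply/eqP => /defN /matrixP /(_ j 0); rewrite !mxE !eqxx /= => /eqP.
by rewrite oner_eq0.
Qed.

Lemma orthant_monotonic_coord (x : 'cV[R]_n) j :
  N (x j 0 *: delta_mx j 0) <= N x.
Proof.
apply: monoN => k; rewrite !mxE.
have -> : (0 : 'I_1) = ord0 by apply/val_inj.
rewrite eqxx andbT; case: eqP => [->|_]; rewrite ?mulr1 ?mulr0 ?mul0r.
  by rewrite -expr2 sqr_ge0 lexx.
by rewrite normr0 normr_ge0 lexx.
Qed.

Lemma induced_norm_ubound (M : 'M[R]_n) :
  has_ubound [set N (M *m x) | x in [set x | N x = 1]].
Proof.
case: vnormN => ge0N [_ [homN _]].
exists (\sum_(j < n) N (M *m delta_mx j 0) / N (delta_mx j 0)).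
move=> _ [x /= Nx1 <-].
have -> : x = \sum_(j < n) x j 0 *: delta_mx j 0.
  by rewrite {1}(matrix_sum_delta x); apply: eq_bigr => j _; rewrite big_ord1.
rewrite mulmx_sumr; apply: le_trans (vnorm_sum_le _) _; apply: ler_sum => j _.
rewrite -scalemxAr homN mulrC ler_wpM2l //.
rewrite -(div1r (N _)) ler_pdivlMr ?vnorm_delta_gt0 // -Nx1 -homN.
exact: orthant_monotonic_coord.
Qed.

Lemma normr_diag_le_induced_norm (M : 'M[R]_n) i :
  `|M i i| <= induced_norm N M.
Proof.
case: vnormN => _ [_ [homN _]].
set c := (N (delta_mx i 0))^-1.
have c_gt0 : 0 < c by rewrite invr_gt0 vnorm_delta_gt0.
set u : 'cV[R]_n := c *: delta_mx i 0.
have Nu1 : N u = 1 by rewrite homN gtr0_norm // mulVf // gt_eqF ?vnorm_delta_gt0.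
have Mu_i : (M *m u) i 0 = c * M i i by rewrite /u -scalemxAr -colE !mxE.
apply: le_trans (ub_le_sup (induced_norm_ubound M) _); last by exists u.
apply: le_trans (orthant_monotonic_coord (M *m u) i).
by rewrite homN Mu_i normrM gtr0_norm // mulrAC mulVf ?gt_eqF ?vnorm_delta_gt0 ?mul1r.
Qed.

Lemma diag_le_measure_quotient (A : 'M[R]_n) i (e : R) : 0 < e ->
  A i i <= (induced_norm N (1%:M + e *: A) - 1) / e.
Proof.
move=> e_gt0; rewrite ler_pdivlMr // lerBrDl mulrC.
apply: le_trans (normr_diag_le_induced_norm _ i).
by apply: le_trans (ler_norm _); rewrite !mxE eqxx mulr1n.
Qed.

Lemma diag_le_matrix_measure (A : 'M[R]_n) i :
  cvg ((fun e : R => (induced_norm N (1%:M + e *: A) - 1) / e) @ 0^'+) ->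
  A i i <= matrix_measure N A.
Proof.
move=> cvg_quot; apply: limr_ge => //.
near=> e; apply: diag_le_measure_quotient.
by near: e; exact: nbhs_right_gt.
Unshelve. all: by end_near.
Qed.

End InducedNorm.

Theorem proposition2 (R : realType) (n : nat) (N : 'cV[R]_n -> R)
  (A : 'M[R]_n) :
  is_vnorm N -> orthant_monotonic N -> matrix_measure N A < 0 ->
  forall i : 'I_n, A i i < 0.
Proof.
move=> vnormN monoN mu_lt0 i.
have [cvg_quot|dvg_quot] :=
  pselect (cvg ((fun e : R => (induced_norm N (1%:M + e *: A) - 1) / e) @ 0^'+)).
  exact: le_lt_trans (diag_le_matrix_measure vnormN monoN i cvg_quot) mu_lt0.
(* [lim] of a divergent quotient defaults to 0, so [mu(A) = 0]. *)
by move: mu_lt0; rewrite /matrix_measure dvgP ?ltxx.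
Qed.
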